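(* Let $G=(V,E)$ be a finite graph with nonnegative edge weights $w\in\mathbb{R}^E$, and let $W\in\mathcal S^V$ be the symmetric matrix with $W_{xy}=w_{xy}$ for $\{x,y\}\in E$ and $W_{xy}=M$ for distinct $x,y$ with $\{x,y\}\notin E$, where $M$ is a positive number larger than all edge weights. Then every perfect elimination ordering of the matrix $-W$ is a distance-preserving elimination ordering of $(G,w)$.
   Context: A perfect elimination ordering of a symmetric matrix $A$ indexed by $V$ is a linear order $\pi$ of $V$ with $A_{yz}\ge\min\{A_{xy},A_{xz}\}$ for all $x<_\pi y<_\pi z$; for $A=-W$ this reads $W_{yz}\le\max\{W_{xy},W_{xz}\}$. $d_{(H,w)}$ denotes the shortest path metric of a weighted graph $(H,w)$. A linear order $v_1,\dots,v_n$ of $V$ is a distance-preserving elimination ordering of $(G,w)$ if for each $i\in[n]$ the induced weighted subgraph $G_i=G[\{v_i,\dots,v_n\}]$ with weights $w$ satisfies: $d_{(G_i,w)}$ coincides with the restriction of $d_{(G,w)}$ to $\{v_i,\dots,v_n\}$. *)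

From HB Require Import structures.
From mathcomp Require Import all_boot all_order all_algebra.
From mathcomp Require Import all_classical all_reals.
From mathcomp Require Import ereal.
Set Implicit Arguments. Unset Strict Implicit. Unset Printing Implicit Defensive.
Import Order.TTheory GRing.Theory Num.Theory.
Local Open Scope classical_set_scope.
Local Open Scope ring_scope.

Section Defs.
Variables (R : realType) (V : finType).

Definition simple_graph (e : rel V) := symmetric e /\ irreflexive e.

Definition walk_weight (w : V -> V -> R) (x : V) (p : seq V) : R :=
  \sum_(uv <- zip (x :: p) p) w uv.1 uv.2.

Definition walk_in (e : rel V) (S : {set V}) (x y : V) (p : seq V) : Prop :=
  [/\ x \in S, all (fun v => v \in S) p, path e x p & last x p = y].

(* Shortest path metric d_{(G[S],w)}(x,y), valued in \bar R
   (+oo when no path exists). *)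
Definition spdist (e : rel V) (w : V -> V -> R) (S : {set V}) (x y : V)
  : \bar R :=
  ereal_inf [set (walk_weight w x p)%:E | p in [set p | walk_in e S x y p]].

(* A linear order of V, represented by an enumeration s of V. *)
Definition linear_order (s : seq V) := uniq s /\ forall v, v \in s.

Definition ltpi (s : seq V) (x y : V) := (index x s < index y s)%N.

Definition peo (A : V -> V -> R) (s : seq V) :=
  linear_order s /\
  forall x y z, ltpi s x y -> ltpi s y z -> Num.min (A x y) (A x z) <= A y z.

(* The vertex set {v_i, ..., v_n} (0-based index i). *)
Definition suffix_set (s : seq V) (i : nat) : {set V} :=
  [set v | (i <= index v s)%N].

Definition dp_elim_ordering (e : rel V) (w : V -> V -> R) (s : seq V) :=
  linear_order s /\
  forall i, (i < size s)%N ->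
    forall x y, x \in suffix_set s i -> y \in suffix_set s i ->
      spdist e w (suffix_set s i) x y = spdist e w [set: V] x y.

(* The matrix W: w on edges, M on distinct non-adjacent pairs, 0 on the
   diagonal (the diagonal is never used). *)
Definition Wmat (e : rel V) (w : V -> V -> R) (M : R) : V -> V -> R :=
  fun x y => if x == y then 0 else if e x y then w x y else M.

End Defs.

(* Take a walk between two vertices of the suffix set S_i and let v be its
   vertex of smallest position in the ordering. If v lies in S_i, so does the
   whole walk. Otherwise v is an inner vertex whose two walk neighbours u, u'
   both come after v. If u = u' the detour u v u can be dropped (weights are
   nonnegative). If u <> u', the elimination inequality for v < u, u' gives
   W_uu' <= max (w_vu, w_vu') < M, so uu' is an edge of weight at most
   w_uv + w_vu', and u v u' can be replaced by u u'. Either way the walk gets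
   shorter and no heavier, so induction on its length yields a walk inside
   S_i that is no heavier than the original one. *)
From HB Require Import structures.
From mathcomp Require Import all_boot all_order all_algebra.
From mathcomp Require Import all_classical all_reals.
From mathcomp Require Import ereal.
Set Implicit Arguments. Unset Strict Implicit. Unset Printing Implicit Defensive.
Import Order.TTheory GRing.Theory Num.Theory.
Local Open Scope ring_scope.

Section WalkWeight.
Variables (R : realType) (V : finType) (w : V -> V -> R).

Lemma walk_weight_nil x : walk_weight w x [::] = 0.
Proof. by rewrite /walk_weight big_nil. Qed.

Lemma walk_weight_cons x y p :
  walk_weight w x (y :: p) = w x y + walk_weight w y p.
Proof. by rewrite /walk_weight /= big_cons. Qed.

Lemma walk_weight_cat x p1 p2 :
  walk_weight w x (p1 ++ p2) =
  walk_weight w x p1 + walk_weight w (last x p1) p2.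
Proof.
elim: p1 x => [|y p1 IH] x /=; first by rewrite walk_weight_nil add0r.
by rewrite !walk_weight_cons IH addrA.
Qed.

End WalkWeight.

Lemma spdist_subset (R : realType) (V : finType) (e : rel V)
    (w : V -> V -> R) (S T : {set V}) x y :
  S \subset T -> (spdist e w T x y <= spdist e w S x y)%E.
Proof.
move=> /fintype.subsetP sST; apply: ereal_inf_le_tmp => _ [p [xS pS ep py] <-].
exists p => //; split => //; first exact: sST.
by apply/allP => v /(allP pS) /sST.
Qed.

Section EliminationOrdering.
Variables (R : realType) (V : finType).

Lemma linear_order_index_inj {s : seq V} : linear_order s -> injective (index ^~ s).
Proof. by move=> [_ alls] u v; apply: index_inj (alls u) (alls v). Qed.

Lemma peo_min_le (A : V -> V -> R) s v a b :
  (forall x y, A x y = A y x) -> peo A s ->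
  ltpi s v a -> ltpi s v b -> a != b -> Num.min (A v a) (A v b) <= A a b.
Proof.
move=> Asym [ord Ape] va vb ab.
case: (ltngtP (index a s) (index b s)) => [lt_ab|lt_ba|/(linear_order_index_inj ord)].
- exact: Ape.
- by rewrite minC (Asym a b); apply: Ape.
- by move/eqP; rewrite (negbTE ab).
Qed.

End EliminationOrdering.

Section Proposition.
Variables (R : realType) (V : finType) (e : rel V) (w : V -> V -> R) (M : R).
Hypothesis graph_e : simple_graph e.
Hypothesis w_sym : forall x y, e x y -> w x y = w y x.
Hypothesis w_ge0 : forall x y, e x y -> 0 <= w x y.
Hypothesis w_ltM : forall x y, e x y -> w x y < M.
Variable s : seq V.
Hypothesis peo_s : peo (fun x y => - Wmat e w M x y) s.

Let W := Wmat e w M.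

Lemma Wmat_sym x y : W x y = W y x.
Proof.
case: graph_e => e_sym _; rewrite /W /Wmat eq_sym e_sym.
by case: eqP => // _; case: ifP => // /w_sym.
Qed.

Lemma Wmat_edge x y : e x y -> W x y = w x y.
Proof.
case: graph_e => _ e_irr exy; rewrite /W /Wmat exy.
by case: eqP exy => // ->; rewrite e_irr.
Qed.

Lemma peo_shortcut v u u' :
  e v u -> e v u' -> ltpi s v u -> ltpi s v u' -> u != u' ->
  e u u' /\ w u u' <= Num.max (w v u) (w v u').
Proof.
move=> evu evu' vu vu' uu'.
have Wle : W u u' <= Num.max (w v u) (w v u').
  rewrite -!Wmat_edge // -lerN2 oppr_max.
  apply: (peo_min_le _ peo_s vu vu' uu') => x y.
  by rewrite -/W Wmat_sym.
have euu' : e u u'.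
  apply: contraTT Wle => neu; rewrite -ltNge /W /Wmat (negbTE uu') (negbTE neu).
  by rewrite gt_max !w_ltM.
by split; rewrite // -Wmat_edge.
Qed.

Lemma bypass_vertex v u u' :
  e u v -> e v u' -> ltpi s v u -> ltpi s v u' ->
  exists q, [/\ path e u q, last u q = u', (size q < 2)%N &
                walk_weight w u q <= w u v + w v u'].
Proof.
move=> euv evu' vu vu'.
have evu : e v u by case: graph_e => e_sym _; rewrite e_sym.
case: (eqVneq u u') => [<-|uu'].
  by exists [::]; rewrite walk_weight_nil addr_ge0 ?w_ge0.
have [euu' wle] := peo_shortcut evu evu' vu vu' uu'.
exists [:: u']; split; rewrite /= ?euu' //.
rewrite walk_weight_cons walk_weight_nil addr0 (le_trans wle) //.
by rewrite ge_max (w_sym evu) lerDl lerDr !w_ge0.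
Qed.

Lemma walk_shorten_outside i x p :
  path e x p -> x \in suffix_set s i -> last x p \in suffix_set s i ->
  ~~ all (fun v => v \in suffix_set s i) p ->
  exists p', [/\ path e x p', last x p' = last x p, (size p' < size p)%N &
                 walk_weight w x p' <= walk_weight w x p].
Proof.
move=> ep xS lS /allPn[z zp zS].
have [v vp vmin] := @arg_minnP _ x [pred u | u \in x :: p] (index ^~ s) (mem_head x p).
have vS : v \notin suffix_set s i.
  move: zS; rewrite !inE -!ltnNge; apply: leq_ltn_trans.
  by apply: vmin; rewrite /= inE zp orbT.
have before_v u : u \in x :: p -> u != v -> ltpi s v u.
  move=> up uv; rewrite /ltpi ltn_neqAle vmin // andbT.
  by apply: contra uv => /eqP/(linear_order_index_inj peo_s.1)->.
have {}vp : v \in p by move: vp; rewrite /= inE; case: eqP xS vS => // -> ->.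
move: ep lS before_v; case/splitPr: vp => p1 [|u' p3].
  by rewrite last_cat /= (negbTE vS).
rewrite cat_path /= => /and4P[ep1 euv evu' ep3] lS before_v.
set u := last x p1 in euv.
have [_ graph_irr] := graph_e.
have vu : ltpi s v u.
  apply: before_v; first by rewrite -cat_cons mem_cat mem_last.
  by apply: contraTneq euv => ->; rewrite graph_irr.
have vu' : ltpi s v u'.
  apply: before_v; first by rewrite inE mem_cat !inE eqxx !orbT.
  by apply: contraTneq evu' => ->; rewrite graph_irr.
have [q [eq_q lq sq wq]] := bypass_vertex euv evu' vu vu'.
exists (p1 ++ q ++ p3); split.
- by rewrite cat_path ep1 cat_path eq_q lq.
- by rewrite !last_cat lq.
- by rewrite !size_cat /= ltn_add2l addnC -addn2 ltn_add2l.
- by rewrite !walk_weight_cat -/u lq /= !walk_weight_cons lerD2l addrA lerD2r.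
Qed.

Lemma walk_in_suffix_set_le i x p :
  path e x p -> x \in suffix_set s i -> last x p \in suffix_set s i ->
  exists2 q, walk_in e (suffix_set s i) x (last x p) q &
             walk_weight w x q <= walk_weight w x p.
Proof.
have [n] := ubnP (size p); elim: n => // n IH in p *; rewrite ltnS => sp ep xS lS.
have [pS|/(walk_shorten_outside ep xS lS)[p' [ep' lp' sp' wp']]] :=
  boolP (all (fun v => v \in suffix_set s i) p); first by exists p.
have [|q qS wq] := IH p' (leq_trans sp' sp) ep' xS; first by rewrite lp'.
by exists q; rewrite -?lp' // (le_trans wq wp').
Qed.

End Proposition.

Theorem proposition1 (R : realType) (V : finType) (e : rel V)
  (w : V -> V -> R) (M : R) :
  simple_graph e ->
  (forall x y, e x y -> w x y = w y x) ->
  (forall x y, e x y -> 0 <= w x y) ->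
  0 < M ->
  (forall x y, e x y -> w x y < M) ->
  forall s : seq V,
    peo (fun x y => - Wmat e w M x y) s -> dp_elim_ordering e w s.
Proof.
move=> graph_e w_sym w_ge0 _ w_ltM s peo_s; split; first by case: peo_s.
move=> i _ x y xS yS; apply/eqP; rewrite eq_le andbC spdist_subset ?subsetT //=.
apply: le_ereal_inf_tmp => _ [p [_ _ ep py] <-]; rewrite -py in yS *.
have [q qS wq] := walk_in_suffix_set_le graph_e w_sym w_ge0 w_ltM peo_s ep xS yS.
apply: (@le_trans _ _ (walk_weight w x q)%:E); last by rewrite lee_fin.
by apply: ereal_inf_lbound; exists q.
Qed.
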